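(* Let $(\Omega,\mathcal{F},\mathbf{P})$ be a probability space and $\theta\colon\Omega\to\Omega$ an ergodic automorphism. Let $A$ be an $N\times N$ matrix with all entries positive, and let $D(\omega)=\mathrm{diag}(d_1(\omega),\dots,d_N(\omega))$ be measurable with $d_i(\omega)>0$ and $\ln^{+}(\max_i d_i(\cdot))\in L_1(\Omega,\mathcal{F},\mathbf{P})$; put $S(\omega)=AD(\omega)$. Suppose $\Omega_0\in\mathcal{F}$ with $\theta(\Omega_0)=\Omega_0$, $\mathbf{P}(\Omega_0)=1$, $w=(w_1,\dots,w_N)\colon\Omega_0\to\mathbb{R}^N$ is measurable with $w(\omega)$ a positive vector and $\|w(\omega)\|=1$ for all $\omega\in\Omega_0$, and $\rho\colon\Omega_0\to(0,\infty)$ satisfies $S(\omega)w(\omega)=\rho(\omega)w(\theta\omega)$ for all $\omega\in\Omega_0$ (such objects exist, with $\lim_{n\to\infty}\frac1n\ln\|S^{(n)}(\omega)w(\omega)\|$ equal to the top Lyapunov exponent on $\Omega_0$). Then for each $1\le i\le N$ the function $\ln w_i(\cdot)$ is bounded uniformly on $\Omega_0$.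
   Context: $\|\cdot\|$ denotes the Euclidean norm; a positive vector has all coordinates positive; $S^{(n)}(\omega)=S(\theta^{n-1}\omega)\cdots S(\omega)$. *)

From HB Require Import structures.
From mathcomp Require Import all_boot all_order all_algebra.
From mathcomp Require Import all_classical all_reals all_analysis.
Set Implicit Arguments. Unset Strict Implicit. Unset Printing Implicit Defensive.
Import Order.TTheory GRing.Theory Num.Theory.
Local Open Scope classical_set_scope.
Local Open Scope ring_scope.

Definition mp_automorphism d (T : measurableType d) (R : realType)
    (P : probability T R) (theta : T -> T) : Prop :=
  exists theta_inv : T -> T,
    [/\ cancel theta theta_inv, cancel theta_inv theta,
        measurable_fun setT theta, measurable_fun setT theta_inv &
        forall E, measurable E -> P (theta @^-1` E) = P E].

Definition ergodic d (T : measurableType d) (R : realType)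
    (P : probability T R) (theta : T -> T) : Prop :=
  forall E, measurable E -> theta @^-1` E = E -> P E = 0%E \/ P E = 1%E.

Definition lnplus (R : realType) (x : R) : R := Num.max (ln x) 0.

Definition enorm (R : realType) (N : nat) (v : 'cV[R]_N) : R :=
  Num.sqrt (\sum_(i < N) v i 0 ^+ 2).

From HB Require Import structures.
From mathcomp Require Import all_boot all_order all_algebra.
From mathcomp Require Import all_classical all_reals all_analysis.
Import Order.TTheory GRing.Theory Num.Theory.
Local Open Scope classical_set_scope.
Local Open Scope ring_scope.

(* The relation [rho w(theta x) = A (D(x) w(x))] shows that every w(y),
   y = theta x in Omega0, is a positive multiple of A applied to a
   nonnegative vector.  If the entries of A lie in [c, C] with c > 0, the
   coordinates of such a vector differ by at most the factor C/c; together
   with ||w(y)|| = 1 this confines every coordinate of w(y) to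
   [c^2/(N C^2), 1], whence |ln w_i| <= ln (N C^2 / c^2). *)

Section PositiveMatrixEntries.
Context {R : realDomainType} {m n : nat} (A : 'M[R]_(m, n)).

Definition mx_min_entry := \big[Num.min/1]_(p : 'I_m * 'I_n) A p.1 p.2.
Definition mx_max_entry := \big[Num.max/1]_(p : 'I_m * 'I_n) A p.1 p.2.

Lemma mx_min_entry_le i j : mx_min_entry <= A i j.
Proof. exact: (bigmin_le 1 (i, j) (fun p => A p.1 p.2)). Qed.

Lemma mx_max_entry_ge i j : A i j <= mx_max_entry.
Proof. exact: (le_bigmax 1 (fun p => A p.1 p.2) (i, j)). Qed.

Lemma mx_max_entry_gt0 : 0 < mx_max_entry.
Proof. exact: lt_le_trans ltr01 (bigmax_ge_id _ _ _ _). Qed.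

Lemma mx_min_entry_gt0 : (forall i j, 0 < A i j) -> 0 < mx_min_entry.
Proof.
move=> A_gt0; rewrite /mx_min_entry; elim/big_ind: _ => [//| a b | p _].
- by rewrite lt_min => -> ->.
- exact: A_gt0.
Qed.

End PositiveMatrixEntries.

(* Both sides are compared with [c * C * \sum_j v_j]. *)
Lemma mulmx_coord_ratio {R : realDomainType} {m n : nat} {A : 'M[R]_(m, n)}
    {v : 'cV[R]_n} {c C : R} :
  0 <= c -> 0 <= C -> (forall i j, c <= A i j <= C) ->
  (forall j, 0 <= v j 0) ->
  forall i k, c * (A *m v) k 0 <= C * (A *m v) i 0.
Proof.
move=> c_ge0 C_ge0 A_bnd v_ge0 i k; rewrite !mxE !mulr_sumr.
apply: (@le_trans _ _ (\sum_j c * C * v j 0)); apply: ler_sum => j _.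
- have /andP[_ AC] := A_bnd k j.
  by rewrite -mulrA ler_wpM2l // ler_wpM2r.
- have /andP[cA _] := A_bnd i j.
  by rewrite (mulrC c) -mulrA ler_wpM2l // ler_wpM2r.
Qed.

Section UnitVector.
Context {R : realType} {N : nat} {u : 'cV[R]_N}.
Hypothesis u_unit : enorm u = 1.

Lemma enorm1_sum_sqr : \sum_k u k 0 ^+ 2 = 1.
Proof.
rewrite -[LHS]sqr_sqrtr; last by apply: sumr_ge0 => k _; rewrite sqr_ge0.
by move: u_unit; rewrite /enorm => ->; rewrite expr1n.
Qed.

Lemma enorm1_coord_le1 i : 0 <= u i 0 -> u i 0 <= 1.
Proof.
move=> ui_ge0; rewrite -ler_sqr ?nnegrE // expr1n -enorm1_sum_sqr.
rewrite (bigD1 i) //= lerDl; apply: sumr_ge0 => k _; exact: sqr_ge0.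
Qed.

Lemma enorm1_coord_ge (c C : R) i :
  0 < c -> 0 < C -> (forall k, 0 < u k 0) ->
  (forall k, c * u k 0 <= C * u i 0) ->
  c ^+ 2 / (N%:R * C ^+ 2) <= u i 0.
Proof.
move=> c_gt0 C_gt0 u_gt0 u_ratio.
have N_gt0 : (0 < N)%N by apply: leq_ltn_trans (ltn_ord i).
have ui_gt0 := u_gt0 i.
have sqr_bnd : c ^+ 2 <= N%:R * (C * u i 0) ^+ 2.
  rewrite -[leLHS]mulr1 -[in leLHS]enorm1_sum_sqr mulr_sumr.
  apply: (@le_trans _ _ (\sum_(k < N) (C * u i 0) ^+ 2)).
    apply: ler_sum => k _.
    by rewrite -exprMn ler_sqr ?nnegrE ?u_ratio ?mulr_ge0 ?ltW.
  by rewrite sumr_const card_ord mulr_natl.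
have ui_le1 : u i 0 <= 1 by apply: enorm1_coord_le1; exact: ltW ui_gt0.
have ui_sqr_le : u i 0 ^+ 2 <= u i 0.
  by rewrite expr2; exact: ler_piMl (ltW ui_gt0) ui_le1.
rewrite ler_pdivrMr ?mulr_gt0 ?exprn_gt0 ?ltr0n //.
apply: (le_trans sqr_bnd); rewrite exprMn mulrA [leRHS]mulrC.
by apply: ler_wpM2l ui_sqr_le; rewrite mulr_ge0 ?sqr_ge0.
Qed.

End UnitVector.

Lemma norm_ln_le {R : realType} (L x : R) :
  0 < L -> L <= x -> x <= 1 -> `|ln x| <= - ln L.
Proof.
move=> L_gt0 Lx x_le1; have x_gt0 := lt_le_trans L_gt0 Lx.
by rewrite ler0_norm ?ln_le0 // lerN2 ler_ln ?posrE.
Qed.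

Theorem lemma3p2 (R : realType) (dsp : measure_display) (T : measurableType dsp)
  (P : probability T R) (theta : T -> T)
  (N : nat) (A : 'M[R]_N) (dg : 'I_N -> T -> R)
  (Omega0 : set T) (w : T -> 'cV[R]_N) (rho : T -> R) :
  mp_automorphism P theta ->
  ergodic P theta ->
  (forall i j, 0 < A i j) ->
  (forall i, measurable_fun setT (dg i)) ->
  (forall i x, 0 < dg i x) ->
  P.-integrable setT (fun x => (lnplus (\big[Num.max/0]_(i < N) dg i x))%:E) ->
  measurable Omega0 ->
  theta @` Omega0 = Omega0 ->
  P Omega0 = 1%E ->
  (forall i, measurable_fun Omega0 (fun x => w x i 0)) ->
  (forall x, Omega0 x -> forall i, 0 < w x i 0) ->
  (forall x, Omega0 x -> enorm (w x) = 1) ->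
  (forall x, Omega0 x -> 0 < rho x) ->
  (forall x, Omega0 x ->
     (A *m diag_mx (\row_i dg i x)) *m w x = rho x *: w (theta x)) ->
  forall i : 'I_N, exists C : R, forall x, Omega0 x -> `|ln (w x i 0)| <= C.
Proof.
move=> _ _ A_gt0 _ dg_gt0 _ _ theta_onto _ _ w_gt0 w_unit rho_gt0 eig i.
set c := mx_min_entry A; set C := mx_max_entry A.
have c_gt0 : 0 < c := mx_min_entry_gt0 _ A_gt0.
have C_gt0 : 0 < C := mx_max_entry_gt0 A.
exists (- ln (c ^+ 2 / (N%:R * C ^+ 2))) => y Oy.
have [x Ox thetax_y] : (theta @` Omega0) y by rewrite theta_onto.
have A_bnd j k : c <= A j k <= C by rewrite mx_min_entry_le mx_max_entry_ge.
have w_ratio k : c * w y k 0 <= C * w y i 0.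
  have v_ge0 j : 0 <= (diag_mx (\row_j dg j x) *m w x) j 0.
    by rewrite mul_diag_mx !mxE mulr_ge0 // ltW ?dg_gt0 ?w_gt0.
  have := mulmx_coord_ratio (ltW c_gt0) (ltW C_gt0) A_bnd v_ge0 i k.
  rewrite mulmxA eig // -thetax_y !mxE !(mulrCA _ (rho x)) ler_pM2l //.
  exact: rho_gt0.
have wy_gt0 := w_gt0 y Oy.
apply: norm_ln_le.
- by rewrite divr_gt0 ?mulr_gt0 ?exprn_gt0 ?ltr0n ?(leq_ltn_trans _ (ltn_ord i)).
- exact: enorm1_coord_ge (w_unit y Oy) c C i c_gt0 C_gt0 wy_gt0 w_ratio.
- exact: enorm1_coord_le1 (w_unit y Oy) i (ltW (wy_gt0 i)).
Qed.
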